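(* Let $q=2^m>4$ and let $l$ be an integer with $0\leq l\leq 3$. Then there exists a linear $l$-intersection pair of two MDS codes over $\mathbb{F}_q$ both with parameters $[q+2,3,q]_q$.
   Context: An $[n,k,d]_q$ linear code is a $k$-dimensional subspace of $\mathbb{F}_q^n$ with minimum Hamming distance $d$; it is MDS if $d=n-k+1$. Two linear codes $C_1,C_2\subseteq\mathbb{F}_q^n$ form a linear $l$-intersection pair if $\dim(C_1\cap C_2)=l$. *)

From HB Require Import structures.
From mathcomp Require Import all_boot all_order all_algebra all_field.
Set Implicit Arguments. Unset Strict Implicit. Unset Printing Implicit Defensive.
Import GRing.Theory.
Local Open Scope ring_scope.

Definition hwt (F : fieldType) (n : nat) (x : 'rV[F]_n) : nat :=
  #|[set i : 'I_n | x 0 i != 0]|.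

Definition hdist (F : fieldType) (n : nat) (x y : 'rV[F]_n) : nat := hwt (x - y).

Definition min_dist_is (F : fieldType) (n : nat) (C : {vspace 'rV[F]_n}) (d : nat) : Prop :=
  (exists x y, [/\ x \in C, y \in C, x != y & hdist x y = d]) /\
  (forall x y, x \in C -> y \in C -> x != y -> (d <= hdist x y)%N).

Definition is_code (F : fieldType) (n k d : nat) (C : {vspace 'rV[F]_n}) : Prop :=
  \dim C = k /\ min_dist_is C d.

Definition is_MDS (F : fieldType) (n : nat) (C : {vspace 'rV[F]_n}) : Prop :=
  min_dist_is C (n - \dim C + 1).

Definition l_intersection_pair (F : fieldType) (n l : nat) (C1 C2 : {vspace 'rV[F]_n}) : Prop :=
  \dim (C1 :&: C2)%VS = l.

From HB Require Import structures.
From mathcomp Require Import all_boot all_order all_algebra all_field.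
From mathcomp Require Import zify ring.
Set Implicit Arguments. Unset Strict Implicit. Unset Printing Implicit Defensive.
Import GRing.Theory.
Local Open Scope ring_scope.

(* For q even, the points (1 : t : t^2) (t in F) of a conic together with its nucleus
   (0 : 1 : 0) and the point (0 : 0 : 1) form a hyperoval of the projective plane: no
   line meets it in three points.  So a nonzero u in F^3 vanishes on at most two
   columns of the matrix G listing these q + 2 points, and G, as well as every column
   rescaling G D of it, generates a [q + 2, 3, q] MDS code.  Let D rescale only the
   three unit columns, by factors lambda_r in {1, e}.  The q - 1 >= 3 unscaled columns
   with t <> 0 determine u, so u G lies in the code of G D iff lambda_r u_r = u_r for
   every r: the two codes meet in a space of dimension #{r | lambda_r = 1}, which can
   be made any l <= 3. *)

Section GeneratorMatrix.
Variables (F : fieldType) (k n : nat).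
Implicit Types (G : 'M[F]_(k, n)) (u : 'rV[F]_k) (x : 'rV[F]_n).

Definition encoder G : 'Hom('rV[F]_k, 'rV[F]_n) := linfun (mulmxr G).

Definition gen_code G : {vspace 'rV[F]_n} := limg (encoder G).

Definition zeros x : {set 'I_n} := [set i | x 0 i == 0].

Lemma encoderE G u : encoder G u = u *m G.
Proof. by rewrite lfunE. Qed.

Lemma gen_codeP G x : reflect (exists u, x = u *m G) (x \in gen_code G).
Proof.
apply: (iffP memv_imgP) => [[u _ ->]|[u ->]]; exists u; rewrite ?encoderE //.
exact: memvf.
Qed.

Lemma lker_encoder G : (forall u, u *m G = 0 -> u = 0) -> lker (encoder G) = 0%VS.
Proof.
move=> G_inj; apply/eqP/lker0P => u v; rewrite !encoderE => /eqP.
by rewrite -subr_eq0 -mulmxBl => /eqP/G_inj/subr0_eq.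
Qed.

Lemma dim_gen_code G : (forall u, u *m G = 0 -> u = 0) -> \dim (gen_code G) = k.
Proof.
move/lker_encoder=> kerG; rewrite limg_dim_eq ?kerG ?capv0 //.
by rewrite dimvf /dim /= mul1n.
Qed.

Lemma hwt0 : hwt (0 : 'rV[F]_n) = 0%N.
Proof. by apply: eq_card0 => i; rewrite inE mxE eqxx. Qed.

Lemma hwt_zeros x : (hwt x + #|zeros x|)%N = n.
Proof.
rewrite /hwt -[RHS]card_ord -(cardsC [set i | x 0 i != 0]); congr (_ + _)%N.
by apply: eq_card => i; rewrite !inE negbK.
Qed.

Lemma hwt_scale x (w : 'rV[F]_n) : (forall i, w 0 i != 0) -> hwt (x *m diag_mx w) = hwt x.
Proof.
move=> w0; apply: eq_card => i; rewrite !inE mul_mx_diag mxE mulf_eq0.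
by rewrite (negbTE (w0 i)) orbF.
Qed.

Lemma gen_code_MDS G d : (0 < d)%N -> (d + k = n + 1)%N ->
    (forall u, u != 0 -> (d <= hwt (u *m G))%N) ->
    (exists2 u, u != 0 & hwt (u *m G) = d) ->
  is_code k d (gen_code G) /\ is_MDS (gen_code G).
Proof.
move=> d_gt0 dkn wtG [u0 u0_neq0 wt_u0].
have G_inj u : u *m G = 0 -> u = 0.
  move=> uG0; apply/eqP; apply: contraLR d_gt0 => /wtG.
  by rewrite uG0 hwt0 leqn0 => /eqP ->.
have md : min_dist_is (gen_code G) d.
  split.
    exists (u0 *m G), 0; split; rewrite ?mem0v ?(introT (gen_codeP _ _)) //.
    - by exists u0.
    - by apply: contraTneq d_gt0 => uG0; rewrite -wt_u0 uG0 hwt0.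
    - by rewrite /hdist subr0.
  move=> _ _ /gen_codeP[u ->] /gen_codeP[v ->] uv; rewrite /hdist -mulmxBl.
  by apply: wtG; rewrite subr_eq0; apply: contraNneq uv => ->.
by rewrite /is_code /is_MDS dim_gen_code // (_ : (n - k + 1 = d)%N) //; lia.
Qed.

Lemma mem_gen_code_cap_scale G (w : 'rV[F]_n) x :
    (forall u, (forall i, w 0 i = 1 -> (u *m G) 0 i = 0) -> u = 0) ->
  (x \in (gen_code G :&: gen_code (G *m diag_mx w))%VS) =
  (x \in gen_code G) && (x *m diag_mx w == x).
Proof.
move=> G_inj; have scaleE v : v *m (G *m diag_mx w) = v *m G *m diag_mx w.
  by rewrite mulmxA.
rewrite memv_cap; apply/andP/andP => [[/gen_codeP[u ->] /gen_codeP[v]]|].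
  rewrite scaleE => uv; have eq_uv : u = v.
    apply/subr0_eq/G_inj => i wi1.
    by rewrite mulmxBl uv mul_mx_diag !mxE wi1 mulr1 subrr.
  rewrite -eq_uv in uv; rewrite -uv eqxx; split=> //.
  by apply/gen_codeP; exists u.
move=> [/gen_codeP[u ->] /eqP fix_u]; split; apply/gen_codeP; exists u => //.
by rewrite scaleE.
Qed.

End GeneratorMatrix.

Section CoordinateSubspace.
Variables (F : fieldType) (k : nat).
Implicit Types (S : {set 'I_k}) (u : 'rV[F]_k).

Definition coord_space S : {vspace 'rV[F]_k} := <<[seq delta_mx 0 r | r in S]>>.

Lemma coord_space_sum S u : \sum_(r in S) u 0 r *: delta_mx 0 r \in coord_space S.
Proof. by apply: memv_suml => r rS; apply/memvZ/memv_span/image_f. Qed.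

Lemma mem_coord_space S u : {in ~: S, forall r, u 0 r = 0} -> u \in coord_space S.
Proof.
move=> u0; rewrite (row_sum_delta u) (bigID (mem S)) /= [X in _ + X]big1 ?addr0.
  exact: coord_space_sum.
by move=> r rS; rewrite u0 ?scale0r ?inE.
Qed.

Lemma dim_coord_space S : \dim (coord_space S) = #|S|.
Proof.
have dim_le T : (\dim (coord_space T) <= #|T|)%N.
  by rewrite (leq_trans (dim_span _)) // size_image.
have : (k <= \dim (coord_space S) + \dim (coord_space (~: S)))%N.
  have dimf : \dim (fullv : {vspace 'rV[F]_k}) = k by rewrite dimvf /dim /= mul1n.
  rewrite -[X in (X <= _)%N]dimf (leq_trans _ (dimv_add_leqif _ _)) //.
  apply/dimvS/subvP => u _; rewrite (row_sum_delta u) (bigID (mem S)) /=.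
  rewrite memv_add ?coord_space_sum //.
  by rewrite (eq_bigl (fun r => r \in ~: S)) ?coord_space_sum // => r; rewrite inE.
have := cardsC S; rewrite card_ord; have := dim_le S; have := dim_le (~: S); lia.
Qed.

End CoordinateSubspace.

Section Roots.
Variable F : finFieldType.
Implicit Type p : {poly F}.

Lemma card_roots_lt p : p != 0 -> (#|[set t : F | root p t]| < size p)%N.
Proof.
move=> p0; rewrite cardE max_poly_roots ?enum_uniq //.
by apply/allP => t; rewrite mem_enum inE.
Qed.

Lemma card_roots_le1_char2 p : 2%:R = 0 :> F -> (size p <= 3)%N ->
  p`_1 = 0 -> p`_2 != 0 -> (#|[set t : F | root p t]| <= 1)%N.
Proof.
move=> char2 sp p1 p2; apply/card_le1_eqP => s t; rewrite !inE => /eqP ps /eqP pt.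
have pE x : p.[x] = p`_0 + p`_2 * x ^+ 2.
  rewrite (horner_coef_wide x sp) !big_ord_recr big_ord0 /= p1; ring.
have : p`_2 * (s - t) ^+ 2 = 0.
  have -> : p`_2 * (s - t) ^+ 2 = p.[s] - p.[t] - 2%:R * (p`_2 * t * (s - t)).
    by rewrite !pE; ring.
  by rewrite ps pt char2; ring.
by move/eqP; rewrite mulf_eq0 (negbTE p2) expf_eq0 subr_eq0 /= => /eqP.
Qed.

(* The left-hand side counts the zeros of the hyperoval codeword with coefficients p,
   see [card_hyperoval_zeros]. *)
Lemma hyperoval_roots_bound p : 2%:R = 0 :> F -> p != 0 -> (size p <= 3)%N ->
  (#|[set t : F | root p t]| + (p`_1 == 0)%R + (p`_2 == 0)%R <= 2)%N.
Proof.
move=> char2 p0 sp; have roots_lt := card_roots_lt p0.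
have roots_le1 := card_roots_le1_char2 char2 sp.
set r := #|_| in roots_lt roots_le1 *.
have size_le j : (forall i, (j <= i < 3)%N -> p`_i = 0) -> (size p <= j)%N.
  move=> pj; apply/leq_sizeP => i ji; have [i3|i3] := ltnP i 3.
    by apply: pj; rewrite ji.
  by move/leq_sizeP: sp; apply.
have [p2|p2] := eqVneq p`_2 0; have [p1|p1] := eqVneq p`_1 0 => /=.
- have : (size p <= 1)%N by apply: size_le => -[|[|[|i]]] //=.
  lia.
- have : (size p <= 2)%N by apply: size_le => -[|[|[|i]]] //=.
  lia.
- have := roots_le1 p1 p2; lia.
- lia.
Qed.

Lemma poly_eq0_on_nonzero p : (size p < #|F|)%N ->
  (forall t, t != 0 -> p.[t] = 0) -> p = 0.
Proof.
move=> sp p_roots; apply/eqP; apply: contraLR sp => p0; rewrite -leqNgt.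
have : (#|F|.-1 <= #|[set t : F | root p t]|)%N.
  rewrite -(cardsC1 0); apply/subset_leq_card/subsetP => t.
  by rewrite !inE => /p_roots/eqP.
have := card_roots_lt p0; lia.
Qed.

End Roots.

Lemma rVpoly_eq0 (R : nzRingType) d (u : 'rV[R]_d) : (rVpoly u == 0) = (u == 0).
Proof. by rewrite -[RHS](inj_eq (can_inj rVpolyK)) linear0. Qed.

Lemma cards_split_ord m n (A : {set 'I_(m + n)}) :
  #|A| = (#|[set j | lshift n j \in A]| + #|[set j | rshift m j \in A]|)%N.
Proof.
rewrite -!sum1_card big_split_ord /=.
by congr (_ + _)%N; apply: eq_bigl => j; rewrite inE.
Qed.

Lemma card_preim_enum_val (T : finType) (P : pred T) :
  #|[set j : 'I_#|T| | P (enum_val j)]| = #|[set x | P x]|.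
Proof.
rewrite -(card_imset _ enum_val_inj); apply: eq_card => x; rewrite inE.
apply/imsetP/idP => [[j] | Px]; first by rewrite inE => Pj ->.
by exists (enum_rank x); rewrite ?inE enum_rankK.
Qed.

Section Hyperoval.
Variable F : finFieldType.
Local Notation q := #|F|.
Implicit Types (u lambda : 'rV[F]_3) (t : F).

(* Columns: (1, t, t^2) for t in F, then (0, 1, 0) and (0, 0, 1). *)
Definition hyperoval : 'M[F]_(3, q + 2) :=
  \matrix_(r, i) match split i with
                 | inl j => enum_val j ^+ r
                 | inr k => (r == lift ord0 k)%:R
                 end.
Local Notation G := hyperoval.

Lemma hyperoval_lshift u j :
  (u *m G) 0 (lshift 2 j) = (rVpoly u).[enum_val j].
Proof.
rewrite mxE (horner_coef_wide _ (size_poly _ _)); apply: eq_bigr => r _.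
by rewrite mxE (unsplitK (inl _ _)) coef_rVpoly_ord.
Qed.

Lemma hyperoval_rshift u k :
  (u *m G) 0 (rshift q k) = (rVpoly u)`_(lift ord0 k).
Proof.
rewrite coef_rVpoly_ord mxE (bigD1 (lift ord0 k)) //= big1 => [|r /negbTE r_k].
  by rewrite mxE (unsplitK (inr _ _)) eqxx mulr1 addr0.
by rewrite mxE (unsplitK (inr _ _)) r_k mulr0.
Qed.

Lemma card_hyperoval_zeros u :
  #|zeros (u *m G)| =
  (#|[set t : F | root (rVpoly u) t]|
   + ((rVpoly u)`_1 == 0)%R + ((rVpoly u)`_2 == 0)%R)%N.
Proof.
rewrite cards_split_ord -addnA; congr (_ + _)%N.
  rewrite -[RHS]card_preim_enum_val; apply: eq_card => j.
  by rewrite !inE hyperoval_lshift.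
rewrite -sum1_card big_mkcond !big_ord_recr big_ord0 /=.
by rewrite !inE !hyperoval_rshift; case: eqP; case: eqP.
Qed.

Hypothesis char2 : 2%:R = 0 :> F.

Lemma hyperoval_hwt_ge u : u != 0 -> (q <= hwt (u *m G))%N.
Proof.
move=> u0; have := hwt_zeros (u *m G); rewrite card_hyperoval_zeros.
have := hyperoval_roots_bound (p := rVpoly u) char2.
by rewrite rVpoly_eq0 => /(_ u0 (size_poly _ _)); lia.
Qed.

Lemma hwt_hyperoval_delta0 : hwt (delta_mx 0 0 *m G) = q.
Proof.
have := hwt_zeros (delta_mx 0 0 *m G).
rewrite card_hyperoval_zeros rVpoly_delta expr0 !coef1 /=.
rewrite (eq_card0 (A := [set t : F | root 1 t])) => [|t]; last first.
  by rewrite inE (negbTE (root1 t)).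
by rewrite eqxx; lia.
Qed.

Lemma hyperoval_scaled_MDS (w : 'rV[F]_(q + 2)) : (forall i, w 0 i != 0) ->
  is_code 3 q (gen_code (G *m diag_mx w)) /\ is_MDS (gen_code (G *m diag_mx w)).
Proof.
move=> w0; have hwtE u : hwt (u *m (G *m diag_mx w)) = hwt (u *m G).
  by rewrite mulmxA hwt_scale.
apply: gen_code_MDS => [||u u0|].
- by apply/card_gt0P; exists 0.
- by rewrite -addnA.
- by rewrite hwtE hyperoval_hwt_ge.
exists (delta_mx 0 0); last by rewrite hwtE hwt_hyperoval_delta0.
by apply/negP => /eqP/matrixP/(_ 0 0); rewrite !mxE eqxx => /eqP; rewrite oner_eq0.
Qed.

Lemma hyperoval_MDS : is_code 3 q (gen_code G) /\ is_MDS (gen_code G).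
Proof.
have := hyperoval_scaled_MDS (w := const_mx 1); rewrite diag_const_mx mulmx1.
by apply => i; rewrite mxE oner_eq0.
Qed.

(* Rescales the unit columns (1, 0, 0), (0, 1, 0), (0, 0, 1) of [G] by the entries
   of [lambda]. *)
Definition hyperoval_scale lambda : 'rV[F]_(q + 2) :=
  \row_i match split i with
         | inl j => if enum_val j == 0 then lambda 0 0 else 1
         | inr k => lambda 0 (lift ord0 k)
         end.

Lemma hyperoval_scale_neq0 lambda :
  (forall r, lambda 0 r != 0) -> forall i, hyperoval_scale lambda 0 i != 0.
Proof.
move=> lambda0 i; rewrite mxE; case: split => [j|k] //.
by case: ifP; rewrite ?oner_eq0.
Qed.

Lemma hyperoval_scale_fixed u lambda :
  (u *m G *m diag_mx (hyperoval_scale lambda) == u *m G) = (u *m diag_mx lambda == u).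
Proof.
have origin_col : (u *m G) 0 (lshift 2 (enum_rank 0)) = u 0 0.
  by rewrite hyperoval_lshift enum_rankK horner_coef0 (coef_rVpoly_ord u ord0).
rewrite !mul_mx_diag; apply/eqP/eqP => fixE; apply/rowP.
  move=> r; rewrite mxE; case: (unliftP ord0 r) => [k ->|->].
    move/rowP/(_ (rshift q k)): fixE; rewrite mxE hyperoval_rshift mxE.
    by rewrite coef_rVpoly_ord (unsplitK (inr _ _)).
  move/rowP/(_ (lshift 2 (enum_rank 0))): fixE; rewrite mxE origin_col.
  by rewrite mxE (unsplitK (inl _ _)) enum_rankK eqxx.
move=> i; rewrite mxE; case: (split_ordP i) => [j ->|k ->].
  rewrite [hyperoval_scale _ _ _]mxE (unsplitK (inl _ _)).
  case: eqP => [j0|_]; last by rewrite mulr1.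
  have -> : j = enum_rank 0 by rewrite -j0 enum_valK.
  by rewrite origin_col; move/rowP/(_ 0): fixE; rewrite mxE.
rewrite [hyperoval_scale _ _ _]mxE (unsplitK (inr _ _)).
rewrite hyperoval_rshift coef_rVpoly_ord.
by move/rowP/(_ (lift ord0 k)): fixE; rewrite mxE.
Qed.

Lemma dim_hyperoval_cap (S : {set 'I_3}) (e : F) : (3 < q)%N -> e != 1 ->
  \dim (gen_code G :&:
        gen_code (G *m diag_mx (hyperoval_scale (\row_r (if r \in S then 1 else e))%R)))%VS
  = #|S|.
Proof.
move=> q_gt3 e1; set w := hyperoval_scale _.
have G_inj u : (forall i, w 0 i = 1 -> (u *m G) 0 i = 0) -> u = 0.
  move=> uw; apply/eqP; rewrite -rVpoly_eq0.
  apply/eqP/poly_eq0_on_nonzero => [|t t0].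
    exact: leq_ltn_trans (size_poly _ _) q_gt3.
  rewrite -[t]enum_rankK -hyperoval_lshift uw //.
  by rewrite mxE (unsplitK (inl _ _)) enum_rankK (negbTE t0).
set C := (gen_code G :&: gen_code (G *m diag_mx w))%VS.
have cap_sub : (C <= encoder G @: coord_space F S)%VS.
  apply/subvP => x; rewrite mem_gen_code_cap_scale // => /andP[/gen_codeP[u ->]].
  rewrite hyperoval_scale_fixed -encoderE => /eqP fix_u.
  apply/memv_img/mem_coord_space => r; rewrite inE => rS.
  move/rowP/(_ r)/eqP: fix_u; rewrite mul_mx_diag !mxE (negbTE rS).
  rewrite -subr_eq0 -{2}[u 0 r]mulr1 -mulrBr mulf_eq0 subr_eq0 (negbTE e1) orbF.
  by move/eqP.
have img_sub : (encoder G @: coord_space F S <= C)%VS.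
  rewrite limg_span; apply/span_subvP => _ /mapP[_ /mapP[r rS ->] ->].
  rewrite encoderE mem_gen_code_cap_scale // (introT (gen_codeP _ _)) /=; last first.
    by exists (delta_mx 0 r).
  rewrite hyperoval_scale_fixed mul_mx_diag; apply/eqP/rowP => j; rewrite !mxE eqxx.
  by case: eqP => [->|]; rewrite ?mul0r // -mem_enum rS mulr1.
have -> : C = (encoder G @: coord_space F S)%VS by apply/subv_anti; rewrite cap_sub.
rewrite limg_dim_eq ?dim_coord_space //.
by rewrite lker_encoder ?capv0 // => u uG0; apply: G_inj => i _; rewrite uG0 mxE.
Qed.

End Hyperoval.

Local Close Scope ring_scope.

Theorem theorem6 (F : finFieldType) (m : nat)
  (hq : #|F| = 2 ^ m) (hq4 : 4 < 2 ^ m) (l : nat) (hl : l <= 3) :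
  exists C1 C2 : {vspace 'rV[F]_(2 ^ m + 2)},
    [/\ is_code 3 (2 ^ m) C1, is_MDS C1,
        is_code 3 (2 ^ m) C2, is_MDS C2
      & l_intersection_pair l C1 C2].
Proof.
have char2 : (2%:R = 0 :> F)%R by apply/pcharf0/(card_finPcharP hq).
have [e] : exists e : F, e \in ~: [set 0%R; 1%R].
  apply/card_gt0P; rewrite lt0n; apply: contraTneq hq4 => no_e.
  by rewrite -hq -(cardsC [set 0%R; 1%R]) no_e cards2; case: (_ != _).
rewrite !inE negb_or => /andP[e0 e1].
have [S card_S] : exists S : {set 'I_3}, #|S| = l.
  exists (widen_ord hl @: setT).
  rewrite card_imset ?cardsT ?card_ord // => i j eq_ij.
  by apply: val_inj; apply: (congr1 val eq_ij).
rewrite -hq in hq4 *.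
set w := hyperoval_scale (\row_r (if r \in S then 1 else e))%R.
have w0 : forall i, (w 0 i != 0)%R.
  by apply: hyperoval_scale_neq0 => r; rewrite mxE; case: ifP; rewrite ?oner_eq0.
have [code1 MDS1] := hyperoval_MDS char2.
have [code2 MDS2] := hyperoval_scaled_MDS char2 w0.
exists (gen_code (hyperoval F)), (gen_code (hyperoval F *m diag_mx w)).
split=> //; rewrite /l_intersection_pair -card_S.
by apply: dim_hyperoval_cap => //; apply: ltnW.
Qed.
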